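(* Assume the setting in the context. Let $x_i, x_j, x_{k_1},\dots,x_{k_m}\in X$ be distinct and $K=\{x_{k_1},\dots,x_{k_m}\}$. Suppose that: (i) there exist $G_1,G_2\in\mathcal G$ and $M,N\subseteq X\setminus\{x_i,x_j\}$ with $x_i-G_1(M\cup\{x_j\})\perp\!\!\!\perp x_j-G_2(N)$; (ii) there exist $G_1,G_2\in\mathcal G$ and $M,N\subseteq X\setminus\{x_i,x_j\}$ with $x_i-G_1(M)\perp\!\!\!\perp x_j-G_2(N\cup\{x_i\})$; (a) for every $q=1,\dots,m$: for all $M\subseteq X\setminus\{x_i,x_{k_q}\}$, $N\subseteq X\setminus\{x_j,x_{k_q}\}$ and $G_1,G_2\in\mathcal G$, $x_i-G_1(M)\not\perp\!\!\!\perp x_j-G_2(N)$. Then $(x_i,x_j)$ is a visible non-edge (w.r.t. $X$), and each $x_{k_q}$ is a parent of $x_i$ or a parent of $x_j$.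
   Context: Model: $X$ is a finite set of observed random variables and $U$ a finite set of unobserved random variables; $V=X\cup U$ and $G=(V,E)$ is a DAG on $V$. Each $v_i\in V$ satisfies $v_i=\sum_{x_j\in \mathrm{pa}(v_i)\cap X} f^{(i)}_j(x_j)+\sum_{u_k\in\mathrm{pa}(v_i)\cap U} f^{(i)}_k(u_k)+n_i$, where the $f$'s are nonlinear functions and the external noises $n_i$ are jointly independent. ''Parent'', ''ancestor'', ''path'', ''d-separation'' refer to $G$ (a path has distinct vertices). Causal Faithfulness Condition (CFC): any conditional independence among variables of $V$ that is not entailed by d-separation in $G$ does not hold. $\perp\!\!\!\perp$ denotes statistical independence, $\not\perp\!\!\!\perp$ dependence. Function class: $\mathcal G$ is a class of generalized additive functions: for $G\in\mathcal G$ and a set $M$ of observed variables, $G(M)=\sum_{x_m\in M} g_m(x_m)$ (with $G(\emptyset)=0$). It satisfies: for any $x_i,x_j\in X$, sets $M,N\subseteq X$, $G_1,G_2\in\mathcal G$ and external noise $n_k$, if $n_k\not\perp\!\!\!\perp x_i-G_1(M)$ and $n_k\not\perp\!\!\!\perp x_j-G_2(N)$ then $x_i-G_1(M)\not\perp\!\!\!\perp x_j-G_2(N)$. Definitions, for $X'\subseteq X$ and $x_i,x_j\in X'$: an unobserved causal path (UCP) from $x_i$ to $x_j$ w.r.t. $X'$ is a directed path $x_i\to\cdots\to v_k\to x_j$ in $G$ with $v_k\notin X'$; an unobserved backdoor path (UBP) between $x_i$ and $x_j$ w.r.t. $X'$ is a path $x_i\leftarrow v_k\leftarrow\cdots\leftarrow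 v\to\cdots\to v_l\to x_j$ with $v_k,v_l\notin X'$ (allowing $v=v_k$, $v=v_l$, or $v=v_k=v_l$; $v$ may be in $X'$). ''UBP/UCP between $x_i$ and $x_j$'' means a UBP or a UCP in either direction. $x_j$ is a visible parent of $x_i$ w.r.t. $X'$ if $x_j$ is a parent of $x_i$ and there is no UBP/UCP between them w.r.t. $X'$; $(x_i,x_j)$ is a visible non-edge w.r.t. $X'$ if there is no edge between them and no UBP/UCP between them w.r.t. $X'$; $(x_i,x_j)$ is invisible w.r.t. $X'$ if there is a UBP/UCP between them w.r.t. $X'$. When $X'$ is omitted, $X'=X$. Standing facts (taken as known), for $X'\subseteq X$ and distinct $x_i,x_j\in X'$: (F1) $x_j$ is a visible parent of $x_i$ w.r.t. $X'$ iff [for all $G_1,G_2\in\mathcal G$, $M\subseteq X'\setminus\{x_i,x_j\}$, $N\subseteq X'\setminus\{x_j\}$: $x_i-G_1(M)\not\perp\!\!\!\perp x_j-G_2(N)$] and [there exist $G_1,G_2\in\mathcal G$, $M\subseteq X'\setminus\{x_i\}$, $N\subseteq X'\setminus\{x_i,x_j\}$ with $x_i-G_1(M)\perp\!\!\!\perp x_j-G_2(N)$]. (F2) $(x_i,x_j)$ is a visible non-edge w.r.t. $X'$ iff there exist $G_1,G_2\in\mathcal G$ and $M,N\subseteq X'\setminus\{x_i,x_j\}$ with $x_i-G_1(M)\perp\!\!\!\perp x_j-G_2(N)$. (F3) $(x_i,x_j)$ is invisible w.r.t. $X'$ iff for all $M\subseteq X'\setminus\{x_i\}$, $N\subseteq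 X'\setminus\{x_j\}$, $G_1,G_2\in\mathcal G$: $x_i-G_1(M)\not\perp\!\!\!\perp x_j-G_2(N)$. *)

From HB Require Import structures.
From mathcomp Require Import all_boot all_order all_algebra.
From mathcomp Require Import all_classical all_reals all_analysis.

Set Implicit Arguments.
Unset Strict Implicit.
Unset Printing Implicit Defensive.

Import Order.TTheory GRing.Theory Num.Theory.
Local Open Scope classical_set_scope.
Local Open Scope ring_scope.

(* Graph-theoretic notions on a finite vertex type V with edge relation
   E (E u v means u -> v).                                            *)
Section Graph.
Variable V : finType.
Variable E : rel V.

Definition acyclic : Prop := forall u v, E u v -> ~~ connect E v u.

Definition adj (u v : V) : bool := E u v || E v u.

Definition skel_path (a b : V) (p : seq V) : Prop :=
  path adj a p /\ uniq (a :: p) /\ last a p = b.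

Definition blocked (C : {set V}) (l : seq V) : Prop :=
  exists (k : nat) (x0 : V), (k.+2 < size l)%N /\
    let u := nth x0 l k in let w := nth x0 l k.+1 in let z := nth x0 l k.+2 in
    ( (~~ (E u w && E z w) /\ w \in C)
    \/ (E u w && E z w /\ forall c, c \in C -> ~~ connect E w c) ).

Definition dsep (A B C : {set V}) : Prop :=
  forall a b p, a \in A -> b \in B -> skel_path a b p -> blocked C (a :: p).

(* unobserved causal path from i to j w.r.t. X':
   i -> ... -> vk -> j with vk not in X', distinct vertices *)
Definition UCP (X' : {set V}) (i j : V) : Prop :=
  exists (p : seq V) (vk : V),
    path E i (p ++ [:: vk; j]) /\ uniq (i :: p ++ [:: vk; j]) /\ vk \notin X'.

(* unobserved backdoor path between i and j w.r.t. X':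
   i <- vk <- ... <- v -> ... -> vl -> j, vk, vl not in X',
   all vertices distinct (v = vk, v = vl allowed). *)
Definition UBP (X' : {set V}) (i j : V) : Prop :=
  exists (v vk vl : V) (s1 s2 p q : seq V),
    path E v s1 /\ path E v s2 /\
    v :: s1 = p ++ [:: vk; i] /\ v :: s2 = q ++ [:: vl; j] /\
    uniq (rev s1 ++ v :: s2) /\ vk \notin X' /\ vl \notin X'.

Definition invisible (X' : {set V}) (i j : V) : Prop :=
  UBP X' i j \/ UBP X' j i \/ UCP X' i j \/ UCP X' j i.

Definition visible_parent (X' : {set V}) (j i : V) : Prop :=
  E j i /\ ~ invisible X' i j.

Definition visible_nonedge (X' : {set V}) (i j : V) : Prop :=
  ~~ E i j /\ ~~ E j i /\ ~ invisible X' i j.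

End Graph.

Section Prob.
Context {R : realType} {d : measure_display} {T : measurableType d}.
Variable P : probability T R.

Definition indep2 (f g : T -> R) : Prop :=
  forall A B : set R, measurable A -> measurable B ->
    P (f @^-1` A `&` g @^-1` B) = (P (f @^-1` A) * P (g @^-1` B))%E.

Variable V : finType.

Definition mutually_indep (n : V -> T -> R) : Prop :=
  forall B : V -> set R, (forall v, measurable (B v)) ->
    P [set w | forall v, B v (n v w)] = (\prod_(v : V) P (n v @^-1` B v))%E.

Definition sigvars (x : V -> T -> R) (S : {set V}) : set (set T) :=
  <<s [set A | exists s (B : set R), s \in S /\ measurable B /\ A = x s @^-1` B] >>.

(* conditional independence of (x_a)_{a in A} and (x_b)_{b in B} given
   (x_c)_{c in C}: for every event E1 of sigma(A), P(E1 | sigma(B u C)) has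
   a sigma(C)-measurable version g (with values in [0,1]). *)
Definition condindep (x : V -> T -> R) (A B C : {set V}) : Prop :=
  forall E1, sigvars x A E1 ->
    exists g : T -> R,
      (forall D : set R, measurable D -> sigvars x C (g @^-1` D)) /\
      (forall w, 0 <= g w <= 1) /\
      (forall F, sigvars x (B :|: C) F ->
         P (E1 `&` F) = (\int[P]_(w in F) (g w)%:E)%E).

(* residual x_i - G(M), where G = (g_m)_m is a generalized additive function *)
Definition res (x : V -> T -> R) (i : V) (g : V -> R -> R) (M : {set V})
  : T -> R := fun w => x i w - \sum_(m in M) g m (x m w).

End Prob.

Definition nonlinear {R : realType} (f : R -> R) : Prop :=
  ~ exists a b : R, forall t, f t = a * t + b.

Local Close Scope classical_set_scope.
Definition fdisjoint (V : finType) (A B : {set V}) : bool := [disjoint A & B].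

From HB Require Import structures.
From mathcomp Require Import all_boot all_order all_algebra.
From mathcomp Require Import all_classical all_reals all_analysis.
Import Order.TTheory GRing.Theory Num.Theory.
Local Open Scope classical_set_scope.
Local Open Scope ring_scope.

(* Conditions (i) and (ii) are independences in which x_j, resp. x_i, has
   been regressed out; by F1 neither variable is then a visible parent of the
   other, and by F3 the pair is not invisible, so it is a visible non-edge.
   Condition (a) says, by F3, that (x_i, x_j) becomes invisible once x_k is
   hidden.  A UBP/UCP w.r.t. X \ {x_k} that is not one w.r.t. X must use x_k
   as the hidden vertex next to x_i or x_j, so x_k is a parent of one of
   them. *)

Section Graph.
Context {V : finType} {E : rel V}.

Lemma path_last_edge {p : seq V} {a u w : V} {s : seq V} :
  path E a s -> a :: s = p ++ [:: u; w] -> E u w.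
Proof.
move: a s; elim: p => [|b p IHp] a s /=.
  by move=> Hp [ea Hs]; move: Hp; rewrite ea Hs /= => /andP[].
move=> Hp [_ Hs]; case: s Hp Hs => [|c s] /=; first by case: p {IHp}.
by move=> /andP[_ Hp] /(IHp _ _ Hp).
Qed.

Lemma invisible_sym (X : {set V}) (i j : V) :
  invisible E X i j -> invisible E X j i.
Proof. by rewrite /invisible; tauto. Qed.

Lemma notin_setD1 {X : {set V}} {k v : V} :
  v \notin X :\ k -> (v == k) || (v \notin X).
Proof. by rewrite !inE negb_and negbK. Qed.

Lemma UCP_setD1 (X : {set V}) (k i j : V) :
  UCP E (X :\ k) i j -> UCP E X i j \/ E k j.
Proof.
move=> [p [vk [Hpath [Huniq /notin_setD1 /orP[/eqP ek | vkX]]]]].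
  by right; rewrite -ek; apply: (path_last_edge (p := i :: p) Hpath).
by left; exists p, vk.
Qed.

Lemma UBP_setD1 (X : {set V}) (k i j : V) :
  UBP E (X :\ k) i j -> UBP E X i j \/ E k i || E k j.
Proof.
move=> [v [vk [vl [s1 [s2 [p [q [P1 [P2 [E1 [E2 [U [Hk Hl]]]]]]]]]]]]].
case/orP: (notin_setD1 Hk) => [/eqP ek | vkX].
  by right; rewrite -ek (path_last_edge P1 E1).
case/orP: (notin_setD1 Hl) => [/eqP el | vlX].
  by right; rewrite -el (path_last_edge P2 E2) orbT.
by left; exists v, vk, vl, s1, s2, p, q.
Qed.

Lemma invisible_setD1 (X : {set V}) (k i j : V) :
  invisible E (X :\ k) i j -> invisible E X i j \/ E k i || E k j.
Proof.
rewrite /invisible => -[|[|[|]]].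
- by case/UBP_setD1; tauto.
- by case/UBP_setD1; rewrite orbC; tauto.
- by case/UCP_setD1 => [|->]; [tauto | rewrite orbT; right].
- by case/UCP_setD1 => [|->]; [tauto | right].
Qed.

Lemma visible_nonedgeP (X : {set V}) (i j : V) :
  ~ invisible E X i j -> ~ visible_parent E X i j ->
  ~ visible_parent E X j i -> visible_nonedge E X i j.
Proof.
move=> Hinv Hij Hji; split; [|split=> //]; apply/ssrbool.negP => He.
  by apply: Hij; split=> // /invisible_sym.
by apply: Hji.
Qed.

Lemma setU1_subset_setD2 {X N : {set V}} {a b : V} :
  a \in X -> a != b -> N \subset X :\: [set a; b] -> a |: N \subset X :\ b.
Proof.
move=> aX ab /fintype.subsetP sN; apply/fintype.subsetP => y; rewrite !inE.
case/orP=> [/eqP -> | /sN]; first by rewrite aX andbT.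
by rewrite !inE => /andP[/norP[_ ->]].
Qed.

Lemma setD2_subset_setD1 {X N : {set V}} {a b : V} :
  N \subset X :\: [set a; b] -> N \subset X :\ b.
Proof.
move=> /fintype.subsetP sN; apply/fintype.subsetP => y /sN.
by rewrite !inE => /andP[/norP[_ ->]].
Qed.

Lemma setD1_setD1 (X : {set V}) (a k : V) : (X :\ k) :\ a = X :\: [set a; k].
Proof. by apply/setP => y; rewrite !inE negb_or andbA. Qed.

End Graph.

Section Facts.
Context {R : realType} {d : measure_display} {T : measurableType d}.
Context {P : probability T R} {V : finType} {E : rel V} {X : {set V}}.
Context {x : V -> T -> R} {calG : set (V -> R -> R)}.

Lemma indep2_sym {f g : T -> R} : indep2 P f g -> indep2 P g f.
Proof. by move=> H A B mA mB; rewrite setIC H // muleC. Qed.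

Hypothesis F1 : forall (X' : {set V}) (i j : V),
  X' \subset X -> i \in X' -> j \in X' -> i != j ->
  (visible_parent E X' j i <->
    ((forall g1 g2 (M N : {set V}), calG g1 -> calG g2 ->
        M \subset X' :\: [set i; j] -> N \subset X' :\ j ->
        ~ indep2 P (res x i g1 M) (res x j g2 N)) /\
     (exists g1 g2 (M N : {set V}), calG g1 /\ calG g2 /\
        M \subset X' :\ i /\ N \subset X' :\: [set i; j] /\
        indep2 P (res x i g1 M) (res x j g2 N)))).

Hypothesis F3 : forall (X' : {set V}) (i j : V),
  X' \subset X -> i \in X' -> j \in X' -> i != j ->
  (invisible E X' i j <->
    (forall g1 g2 (M N : {set V}), calG g1 -> calG g2 ->
        M \subset X' :\ i -> N \subset X' :\ j ->
        ~ indep2 P (res x i g1 M) (res x j g2 N))).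

Context {i j : V}.
Hypotheses (Hi : i \in X) (Hj : j \in X) (Hij : i != j).

Lemma not_visible_parent_of_indep_setU1 {g1 g2} {M N : {set V}} :
  calG g1 -> calG g2 ->
  M \subset X :\: [set i; j] -> N \subset X :\: [set i; j] ->
  indep2 P (res x i g1 M) (res x j g2 (i |: N)) -> ~ visible_parent E X j i.
Proof.
move=> c1 c2 sM sN Hind /(F1 X i j (subxx _) Hi Hj Hij) [Hdep _].
exact: Hdep _ _ _ _ c1 c2 sM (setU1_subset_setD2 Hi Hij sN) Hind.
Qed.

Lemma not_invisible_of_indep_setU1 {g1 g2} {M N : {set V}} :
  calG g1 -> calG g2 ->
  M \subset X :\: [set i; j] -> N \subset X :\: [set i; j] ->
  indep2 P (res x i g1 (j |: M)) (res x j g2 N) -> ~ invisible E X i j.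
Proof.
move=> c1 c2 sM sN Hind /(F3 X i j (subxx _) Hi Hj Hij) Hdep.
apply: Hdep _ _ _ _ c1 c2 _ (setD2_subset_setD1 sN) Hind.
by rewrite finset.setUC in sM; apply: setU1_subset_setD2 sM; rewrite // eq_sym.
Qed.

Lemma invisible_setD1_of_dep {k : V} :
  k \in X -> i != k -> j != k ->
  (forall g1 g2 (M N : {set V}), calG g1 -> calG g2 ->
     M \subset X :\: [set i; k] -> N \subset X :\: [set j; k] ->
     ~ indep2 P (res x i g1 M) (res x j g2 N)) ->
  invisible E (X :\ k) i j.
Proof.
move=> kX ik jk Hdep.
apply/(F3 (X :\ k) i j (subD1set X k)); rewrite ?inE ?ik ?jk //.
by move=> g1 g2 M N; rewrite !setD1_setD1; apply: Hdep.
Qed.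

End Facts.

Theorem lemma10
  (R : realType) (d : measure_display) (T : measurableType d)
  (P : probability T R)
  (V : finType) (E : rel V) (X : {set V})
  (f : V -> V -> R -> R) (nz : V -> T -> R) (x : V -> T -> R)
  (calG : set (V -> R -> R))
  (* the model *)
  (HDAG : acyclic E)
  (Hf : forall i j, E j i -> measurable_fun setT (f i j) /\ nonlinear (f i j))
  (Hnz : forall k, measurable_fun setT (nz k))
  (HSEM : forall i w, x i w = \sum_(j | E j i) f i j (x j w) + nz i w)
  (Hnoise : mutually_indep P nz)
  (HCFC : forall A B C : {set V},
      fdisjoint A B -> fdisjoint A C -> fdisjoint B C ->
      condindep P x A B C -> dsep E A B C)
  (* the function class *)
  (HGmeas : forall g, calG g -> forall m, measurable_fun setT (g m))
  (HG : forall (i j k : V) (M N : {set V}) g1 g2,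
      i \in X -> j \in X -> M \subset X -> N \subset X ->
      calG g1 -> calG g2 ->
      ~ indep2 P (nz k) (res x i g1 M) -> ~ indep2 P (nz k) (res x j g2 N) ->
      ~ indep2 P (res x i g1 M) (res x j g2 N))
  (* standing facts F1, F2, F3 *)
  (F1 : forall (X' : {set V}) (i j : V), X' \subset X -> i \in X' -> j \in X' -> i != j ->
      (visible_parent E X' j i <->
        ((forall g1 g2 (M N : {set V}), calG g1 -> calG g2 ->
            M \subset X' :\: [set i; j] -> N \subset X' :\ j ->
            ~ indep2 P (res x i g1 M) (res x j g2 N)) /\
         (exists g1 g2 (M N : {set V}), calG g1 /\ calG g2 /\
            M \subset X' :\ i /\ N \subset X' :\: [set i; j] /\
            indep2 P (res x i g1 M) (res x j g2 N)))))
  (F2 : forall (X' : {set V}) (i j : V), X' \subset X -> i \in X' -> j \in X' -> i != j ->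
      (visible_nonedge E X' i j <->
        exists g1 g2 (M N : {set V}), calG g1 /\ calG g2 /\
          M \subset X' :\: [set i; j] /\ N \subset X' :\: [set i; j] /\
          indep2 P (res x i g1 M) (res x j g2 N)))
  (F3 : forall (X' : {set V}) (i j : V), X' \subset X -> i \in X' -> j \in X' -> i != j ->
      (invisible E X' i j <->
        (forall g1 g2 (M N : {set V}), calG g1 -> calG g2 ->
            M \subset X' :\ i -> N \subset X' :\ j ->
            ~ indep2 P (res x i g1 M) (res x j g2 N))))
  (* the data of the lemma *)
  (i j : V) (K : {set V})
  (Hi : i \in X) (Hj : j \in X) (Hij : i != j)
  (HK : K \subset X) (HiK : i \notin K) (HjK : j \notin K)
  (H1 : exists g1 g2 (M N : {set V}), calG g1 /\ calG g2 /\
      M \subset X :\: [set i; j] /\ N \subset X :\: [set i; j] /\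
      indep2 P (res x i g1 (j |: M)) (res x j g2 N))
  (H2 : exists g1 g2 (M N : {set V}), calG g1 /\ calG g2 /\
      M \subset X :\: [set i; j] /\ N \subset X :\: [set i; j] /\
      indep2 P (res x i g1 M) (res x j g2 (i |: N)))
  (Ha : forall k, k \in K ->
      forall g1 g2 (M N : {set V}), calG g1 -> calG g2 ->
        M \subset X :\: [set i; k] -> N \subset X :\: [set j; k] ->
        ~ indep2 P (res x i g1 M) (res x j g2 N)) :
  visible_nonedge E X i j /\ (forall k, k \in K -> E k i || E k j).
Proof.
have [g1 [g2 [M [N [c1 [c2 [sM [sN Hind1]]]]]]]] := H1.
have notinv : ~ invisible E X i j.
  exact: (not_invisible_of_indep_setU1 F3 Hi Hj Hij c1 c2 sM sN Hind1).
have Hji : j != i by rewrite eq_sym.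
have nij : ~ visible_parent E X i j.
  rewrite finset.setUC in sM sN.
  exact: (not_visible_parent_of_indep_setU1 F1 Hj Hi Hji c2 c1 sN sM
    (indep2_sym Hind1)).
have nji : ~ visible_parent E X j i.
  have [h1 [h2 [M' [N' [d1 [d2 [sM' [sN' Hind2]]]]]]]] := H2.
  exact: (not_visible_parent_of_indep_setU1 F1 Hi Hj Hij d1 d2 sM' sN' Hind2).
split; first exact: visible_nonedgeP.
move=> k kK.
have kX : k \in X by apply: (fintype.subsetP HK).
have ik : i != k by apply: contraNneq HiK => ->.
have jk : j != k by apply: contraNneq HjK => ->.
have Hinv : invisible E (X :\ k) i j.
  exact: (invisible_setD1_of_dep F3 Hi Hj Hij kX ik jk (Ha k kK)).
by case/invisible_setD1: Hinv => [/notinv []|].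
Qed.
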